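(* Let $0=t_0<t_1<\dots<t_N=T$ be a time grid with $\tau_k=t_k-t_{k-1}$ and $r_k=\tau_k/\tau_{k-1}$ ($k\ge2$). Let $0<\iota<1$ and let $v\in C^2(0,T]$ (and $v\in C[0,T]$) satisfy $|v_{tt}(t)|\le C(1+t^{\iota-2})$ for $t\in(0,T]$. Define, for $2\le n\le N$, $\mathcal R^n[v]:=v(t_n)-(1+r_n)v(t_{n-1})+r_nv(t_{n-2})$. Then there is a constant $C_v$ depending only on $v$ such that $$|\mathcal R^2[v]|\le C_v\big((\tau_1+\tau_2)^\iota/\iota+t_1^{\iota-2}\tau_2^2\big),\qquad |\mathcal R^n[v]|\le C_v\big(t_{n-2}^{\iota-2}(\tau_{n-1}+\tau_n)^2+t_{n-1}^{\iota-2}\tau_n^2\big),\ 3\le n\le N.$$ Moreover, if the grid is graded, $t_k=T(k/N)^\gamma$ with $\gamma\ge1$, then $|\mathcal R^n[v]|\le C_{v,\gamma}N^{-\min\{2,\gamma\iota\}}$ for $2\le n\le N$, where $C_{v,\gamma}$ depends only on $v$ and $\gamma$. *)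

From Stdlib Require Import Reals Lra.
From Coquelicot Require Import Coquelicot.
Open Scope R_scope.

(* real power x^y for x >= 0 (x^y := 0 at x = 0, used only with y > 0) *)
Definition rpow (x y : R) : R := if Rle_dec x 0 then 0 else Rpower x y.

Definition is_grid (T : R) (N : nat) (t : nat -> R) : Prop :=
  t 0%nat = 0 /\ t N = T /\ (forall k : nat, (k < N)%nat -> t k < t (S k)).

Definition tau (t : nat -> R) (k : nat) : R := t k - t (pred k).

Definition ratio (t : nat -> R) (k : nat) : R := tau t k / tau t (pred k).

Definition Rres (t : nat -> R) (v : R -> R) (n : nat) : R :=
  v (t n) - (1 + ratio t n) * v (t (n - 1)%nat) + ratio t n * v (t (n - 2)%nat).

Definition graded_grid (T : R) (N : nat) (gamma : R) (k : nat) : R :=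
  T * rpow (INR k / INR N) gamma.

From Stdlib Require Import Reals Lra Lia.
From Coquelicot Require Import Coquelicot.
Open Scope R_scope.

(* Expanding v to first order around t_{n-1} writes R^n[v] as one Taylor remainder
   minus r_n times another, each bounded by sup |v''| times a squared step.  For n >= 3
   the bound C (1 + t^(iota-2)) on [t_{n-2}, t_n] is a multiple of t_{n-2}^(iota-2).
   For n = 2 the left remainder reaches the singularity at 0; there the bound on v'' is
   integrated twice by comparison with explicit majorants, which gives
   |v a - v 0 - a v'(a)| <= C (a^iota / (iota (1 - iota)) + a^2 / 2).
   On the graded grid t_{n-2} >= 3^(-gamma) t_n and t_n - t_{n-2} <= (2 gamma / n) t_n,
   so every bound reduces to T^iota (n/N)^(gamma iota) n^(-2) <= T^iota N^(-min(2, gamma iota)). *)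

Lemma is_derive_continuity_pt (f : R -> R) x l : is_derive f x l -> continuity_pt f x.
Proof. intros Hf; apply derivable_continuous_pt; exists l; now apply is_derive_Reals. Qed.

Lemma is_derive_eq (f : R -> R) (x l l' : R) : l = l' -> is_derive f x l -> is_derive f x l'.
Proof. now intros <-. Qed.

Lemma is_derive_scal_id (c x : R) : is_derive (fun y => c * y) x c.
Proof. apply (is_derive_eq _ _ (c * 1)); [ring|]. apply is_derive_scal; exact (is_derive_id x). Qed.

Lemma MVT_is_derive (f df : R -> R) a b : a < b ->
  (forall x, a <= x <= b -> continuity_pt f x) ->
  (forall x, a < x < b -> is_derive f x (df x)) ->
  exists c, a < c < b /\ f b - f a = df c * (b - a).
Proof.
  intros Hab Hc Hd.
  assert (pr : forall c, a < c < b -> derivable_pt f c).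
  { intros c Hc'; exists (df c); now apply is_derive_Reals, Hd. }
  destruct (MVT f id a b pr (fun c _ => derivable_pt_id c) Hab Hc
    (fun c _ => derivable_continuous_pt _ _ (derivable_pt_id c))) as [c [Pc Ec]].
  exists c; split; [exact Pc|].
  rewrite derive_pt_id, (derive_pt_eq_0 _ _ _ _ (proj1 (is_derive_Reals _ _ _) (Hd c Pc))) in Ec.
  unfold id in Ec; lra.
Qed.

Lemma nondecreasing_of_derive_ge0 (f df : R -> R) a b : a <= b ->
  (forall x, a <= x <= b -> continuity_pt f x) ->
  (forall x, a < x < b -> is_derive f x (df x)) ->
  (forall x, a < x < b -> 0 <= df x) -> f a <= f b.
Proof.
  intros [Hab | <-] Hc Hd Hpos; [| lra].
  destruct (MVT_is_derive f df a b Hab Hc Hd) as [c [Pc Ec]].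
  specialize (Hpos c Pc); nra.
Qed.

Lemma Rabs_sub_le_of_derive_le (f df g dg : R -> R) a b : a <= b ->
  (forall x, a <= x <= b -> continuity_pt f x) ->
  (forall x, a <= x <= b -> continuity_pt g x) ->
  (forall x, a < x < b -> is_derive f x (df x)) ->
  (forall x, a < x < b -> is_derive g x (dg x)) ->
  (forall x, a < x < b -> Rabs (df x) <= dg x) ->
  Rabs (f b - f a) <= g b - g a.
Proof.
  intros Hab Hcf Hcg Hdf Hdg Hle.
  assert (Hsub : g a - f a <= g b - f b).
  { apply (nondecreasing_of_derive_ge0 (fun x => g x - f x) (fun x => dg x - df x)); [exact Hab | | |].
    - intros x Hx; apply continuity_pt_minus; auto.
    - intros x Hx; apply (is_derive_minus g f); auto.
    - intros x Hx; specialize (Hle x Hx); apply Rabs_le_between in Hle; lra. }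
  assert (Hadd : g a + f a <= g b + f b).
  { apply (nondecreasing_of_derive_ge0 (fun x => g x + f x) (fun x => dg x + df x)); [exact Hab | | |].
    - intros x Hx; apply continuity_pt_plus; auto.
    - intros x Hx; apply (is_derive_plus g f); auto.
    - intros x Hx; specialize (Hle x Hx); apply Rabs_le_between in Hle; lra. }
  apply Rabs_le; lra.
Qed.

Lemma Rabs_sub_le_of_derive_bound (f df : R -> R) a b M : a <= b ->
  (forall x, a <= x <= b -> continuity_pt f x) ->
  (forall x, a < x < b -> is_derive f x (df x)) ->
  (forall x, a < x < b -> Rabs (df x) <= M) ->
  Rabs (f b - f a) <= M * (b - a).
Proof.
  intros Hab Hc Hd Hle.
  replace (M * (b - a)) with (M * b - M * a) by ring.
  apply (Rabs_sub_le_of_derive_le f df (fun x => M * x) (fun _ => M)); auto.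
  - intros x _; exact (is_derive_continuity_pt _ _ _ (is_derive_scal_id M x)).
  - intros x _; apply is_derive_scal_id.
Qed.

Lemma taylor1_Rabs_le (v v1 v2 : R -> R) a b p M : a < b -> a <= p <= b ->
  (forall x, a <= x <= b -> continuity_pt v x) ->
  (forall x, a < x < b -> is_derive v x (v1 x)) ->
  (forall x, a < x < b -> is_derive v1 x (v2 x)) ->
  continuity_pt v1 p ->
  (forall x, a < x < b -> Rabs (v2 x) <= M) ->
  Rabs (v b - v a - (b - a) * v1 p) <= M * (b - a) ^ 2.
Proof.
  intros Hab Hp Hv Hv1 Hv2 Hcp HM.
  assert (Hlip : forall x y, a <= x <= y -> y <= b -> continuity_pt v1 x -> continuity_pt v1 y ->
                 Rabs (v1 y - v1 x) <= M * (y - x)).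
  { intros x y Hxy Hyb Hcx Hcy.
    apply (Rabs_sub_le_of_derive_bound v1 v2); [lra | | intros; apply Hv2; lra | intros; apply HM; lra].
    intros w Hw. destruct (Req_dec w x) as [-> | Hwx]; [exact Hcx|].
    destruct (Req_dec w y) as [-> | Hwy]; [exact Hcy|].
    apply (is_derive_continuity_pt _ _ _ (Hv2 w ltac:(lra))). }
  assert (Hv1p : forall y, a < y < b -> Rabs (v1 y - v1 p) <= M * (b - a)).
  { intros y Hy. pose proof (is_derive_continuity_pt _ _ _ (Hv2 y Hy)) as Hcy.
    assert (HM0 : 0 <= M) by (eapply Rle_trans; [apply Rabs_pos | apply (HM y Hy)]).
    destruct (Rle_dec y p) as [Hyp | Hyp].
    - rewrite Rabs_minus_sym. eapply Rle_trans; [apply Hlip; auto; lra|].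
      apply Rmult_le_compat_l; lra.
    - eapply Rle_trans; [apply Hlip; auto; lra|]. apply Rmult_le_compat_l; lra. }
  replace (v b - v a - (b - a) * v1 p) with ((v b - v1 p * b) - (v a - v1 p * a)) by ring.
  replace (M * (b - a) ^ 2) with (M * (b - a) * (b - a)) by ring.
  apply (Rabs_sub_le_of_derive_bound (fun y => v y - v1 p * y) (fun y => v1 y - v1 p));
    [lra | | | intros; apply Hv1p; lra].
  - intros x Hx. apply (continuity_pt_minus v (fun y => v1 p * y)); [now apply Hv|].
    exact (is_derive_continuity_pt _ _ _ (is_derive_scal_id (v1 p) x)).
  - intros x Hx. apply (is_derive_minus v (fun y => v1 p * y));
      [now apply Hv1 | apply is_derive_scal_id].
Qed.

Lemma Rabs_le_of_continuity_pt_right (F : R -> R) p h B : continuity_pt F p -> 0 < h ->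
  (forall x, p < x < p + h -> Rabs (F x) <= B) -> Rabs (F p) <= B.
Proof.
  intros Hc Hh HB. apply Rnot_lt_le; intros Hlt.
  destruct (Hc (Rabs (F p) - B) ltac:(lra)) as [d [Hd Hdd]].
  set (x := p + Rmin d h / 2).
  assert (Hm : 0 < Rmin d h) by (apply Rmin_pos; lra).
  assert (Hxd : Rmin d h <= d) by apply Rmin_l.
  assert (Hxh : Rmin d h <= h) by apply Rmin_r.
  assert (Hnear : Rabs (F x - F p) < Rabs (F p) - B).
  { apply Hdd; split; [split; [exact I | unfold x; lra]|].
    simpl; unfold R_dist, x. rewrite Rabs_right; lra. }
  pose proof (HB x ltac:(unfold x; lra)).
  pose proof (Rabs_triang_inv (F p) (F x)). rewrite Rabs_minus_sym in Hnear. lra.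
Qed.

Lemma rpow_Rpower x y : 0 < x -> rpow x y = Rpower x y.
Proof. intros Hx; unfold rpow; destruct (Rle_dec x 0); [lra | reflexivity]. Qed.

Lemma rpow_ge0 x y : 0 <= rpow x y.
Proof. unfold rpow; destruct (Rle_dec x 0); [lra | left; apply exp_pos]. Qed.

Lemma Rpower_pos x y : 0 < Rpower x y.
Proof. apply exp_pos. Qed.

Lemma Rpower_2 x : 0 < x -> Rpower x 2 = x ^ 2.
Proof. intros Hx; rewrite <- Rpower_pow by exact Hx; f_equal; simpl; ring. Qed.

Lemma Rle_Rpower_l_neg a b y : y <= 0 -> 0 < a <= b -> Rpower b y <= Rpower a y.
Proof.
  intros Hy Hab. replace y with (- - y) by ring. rewrite (Rpower_Ropp b), (Rpower_Ropp a).
  apply Rinv_le_contravar; [apply Rpower_pos | apply Rle_Rpower_l; lra].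
Qed.

Lemma is_derive_Rpower y x : 0 < x -> is_derive (fun s => Rpower s y) x (y * Rpower x (y - 1)).
Proof. intros Hx; now apply is_derive_Reals, derivable_pt_lim_power. Qed.

Lemma Rpower_sub_le g x y : 1 <= g -> 0 < x <= y ->
  Rpower y g - Rpower x g <= g * Rpower y (g - 1) * (y - x).
Proof.
  intros Hg [Hx [Hxy | <-]]; [| lra].
  destruct (MVT_is_derive (fun s => Rpower s g) (fun s => g * Rpower s (g - 1)) x y Hxy)
    as [c [Hc ->]].
  - intros s Hs; exact (is_derive_continuity_pt _ _ _ (is_derive_Rpower g s ltac:(lra))).
  - intros s Hs; apply is_derive_Rpower; lra.
  - apply Rmult_le_compat_r; [lra|]. apply Rmult_le_compat_l; [lra|].
    apply Rle_Rpower_l; lra.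
Qed.

Lemma is_grid_lt T N t : is_grid T N t -> forall i j, (i < j <= N)%nat -> t i < t j.
Proof.
  intros (_ & _ & Hstep) i j Hij. induction j as [| j IH]; [lia|].
  destruct (Nat.eq_dec i j) as [-> | Hne]; [apply Hstep; lia|].
  apply Rlt_trans with (t j); [apply IH; lia | apply Hstep; lia].
Qed.

Lemma is_grid_le_T T N t j : is_grid T N t -> (j <= N)%nat -> t j <= T.
Proof.
  intros G Hj. destruct (Nat.eq_dec j N) as [-> | Hne]; [right; apply G|].
  rewrite <- (proj1 (proj2 G)). left; apply (is_grid_lt T N t G); lia.
Qed.

Lemma exp_le_compat x y : x <= y -> exp x <= exp y.
Proof. intros [Hlt | ->]; [left; now apply exp_increasing | right; reflexivity]. Qed.

Lemma Rpower_inv_l x y : 0 < x -> Rpower (/ x) y = Rpower x (- y).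
Proof. intros Hx; unfold Rpower; rewrite ln_Rinv by exact Hx; f_equal; ring. Qed.

Lemma Rpower_div_le_Rmin x N e : 1 <= x <= N -> 0 <= e ->
  Rpower (x / N) e <= x ^ 2 * Rpower N (- Rmin 2 e).
Proof.
  intros Hx He. rewrite <- Rpower_2 by lra. unfold Rpower.
  rewrite <- exp_plus, ln_div by lra. apply exp_le_compat.
  assert (Hl : 0 <= ln x) by (rewrite <- ln_1; apply ln_le; lra).
  assert (HlL : ln x <= ln N) by (apply ln_le; lra).
  unfold Rmin; destruct (Rle_dec 2 e); nra.
Qed.

Section GradedGrid.

Variables (T gamma : R) (N : nat).
Hypotheses (T_gt0 : 0 < T) (gamma_ge1 : 1 <= gamma) (N_ge1 : (1 <= N)%nat).

Let t := graded_grid T N gamma.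

Let INR_pos k : (1 <= k)%nat -> 0 < INR k.
Proof. intros Hk; apply lt_0_INR; lia. Qed.

Lemma graded_grid_Rpower k : (1 <= k)%nat -> t k = T * Rpower (INR k / INR N) gamma.
Proof.
  intros Hk. unfold t, graded_grid. rewrite rpow_Rpower; [reflexivity|].
  apply Rdiv_lt_0_compat; apply INR_pos; lia.
Qed.

Lemma graded_grid_pos k : (1 <= k)%nat -> 0 < t k.
Proof.
  intros Hk; rewrite graded_grid_Rpower by exact Hk.
  apply Rmult_lt_0_compat; [lra | apply Rpower_pos].
Qed.

Lemma graded_grid_is_grid : is_grid T N t.
Proof.
  assert (Ht0 : t 0%nat = 0).
  { unfold t, graded_grid, rpow. simpl INR. rewrite Rdiv_0_l.
    destruct (Rle_dec 0 0); [ring | lra]. }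
  split; [exact Ht0 | split].
  - rewrite graded_grid_Rpower by exact N_ge1. unfold Rdiv; rewrite Rinv_r by (apply not_0_INR; lia).
    unfold Rpower; rewrite ln_1, Rmult_0_r, exp_0; ring.
  - intros [| k] Hk; [rewrite Ht0; apply graded_grid_pos; lia|].
    rewrite !graded_grid_Rpower by lia. apply Rmult_lt_compat_l; [exact T_gt0|].
    apply Rlt_Rpower_l; [lra|]. split.
    + apply Rdiv_lt_0_compat; apply INR_pos; lia.
    + apply Rmult_lt_compat_r; [apply Rinv_0_lt_compat, INR_pos; lia | apply lt_INR; lia].
Qed.

Lemma graded_grid_scale j n : (1 <= j)%nat -> (1 <= n)%nat ->
  t j = Rpower (INR j / INR n) gamma * t n.
Proof.
  intros Hj Hn. rewrite !graded_grid_Rpower by assumption.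
  pose proof (INR_pos j Hj); pose proof (INR_pos n Hn); pose proof (INR_pos N N_ge1).
  rewrite <- Rmult_assoc, (Rmult_comm _ T), Rmult_assoc, Rpower_mult_distr
    by (apply Rdiv_lt_0_compat; lra).
  f_equal; f_equal; field; lra.
Qed.

Lemma graded_grid_gap j n : (1 <= j <= n)%nat ->
  t n - t j <= gamma * (INR n - INR j) / INR n * t n.
Proof.
  intros Hjn. rewrite !graded_grid_Rpower by lia.
  pose proof (INR_pos j ltac:(lia)); pose proof (INR_pos n ltac:(lia)); pose proof (INR_pos N N_ge1).
  assert (Hjn' : INR j <= INR n) by (apply le_INR; lia).
  set (x := INR j / INR N). set (y := INR n / INR N).
  assert (Hx : 0 < x) by (unfold x; apply Rdiv_lt_0_compat; lra).
  assert (Hxy : x <= y) by (unfold x, y; apply Rmult_le_compat_r; [left; apply Rinv_0_lt_compat|]; lra).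
  assert (Hy1 : Rpower y (gamma - 1) = Rpower y gamma / y).
  { unfold Rminus; rewrite Rpower_plus, Rpower_Ropp, Rpower_1 by lra; reflexivity. }
  pose proof (Rpower_sub_le gamma x y gamma_ge1 ltac:(lra)) as Hsub. rewrite Hy1 in Hsub.
  replace (gamma * (INR n - INR j) / INR n * (T * Rpower y gamma))
    with (T * (gamma * (Rpower y gamma / y) * (y - x))) by (unfold x, y; field; lra).
  rewrite <- Rmult_minus_distr_l. apply Rmult_le_compat_l; lra.
Qed.

Lemma graded_grid_Rpower_antitone j n y : y <= 0 -> (1 <= j <= n)%nat -> (n <= 3 * j)%nat ->
  Rpower (t j) y <= Rpower 3 (- (gamma * y)) * Rpower (t n) y.
Proof.
  intros Hy Hjn Hn3. rewrite (graded_grid_scale j n) by lia.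
  pose proof (INR_pos j ltac:(lia)); pose proof (INR_pos n ltac:(lia)).
  assert (H3 : / 3 <= INR j / INR n).
  { assert (INR n <= 3 * INR j)
      by (replace 3 with (INR 3) by (simpl; ring); rewrite <- mult_INR; apply le_INR; lia).
    apply (Rmult_le_reg_r (3 * INR n)); [lra|]. field_simplify; lra. }
  pose proof (graded_grid_pos n ltac:(lia)).
  apply Rle_trans with (Rpower (Rpower (/ 3) gamma * t n) y).
  - apply Rle_Rpower_l_neg; [exact Hy | split; [apply Rmult_lt_0_compat; [apply Rpower_pos | lra]|]].
    apply Rmult_le_compat_r; [lra|]. apply Rle_Rpower_l; lra.
  - rewrite <- Rpower_mult_distr by (apply Rpower_pos || apply graded_grid_pos; lia).
    rewrite Rpower_mult, Rpower_inv_l by lra. lra.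
Qed.

Lemma graded_grid_Rpower_decay n e : 0 <= e -> (1 <= n <= N)%nat ->
  Rpower (t n) e <= INR n ^ 2 * (Rpower T e * Rpower (INR N) (- Rmin 2 (gamma * e))).
Proof.
  intros He Hn. rewrite graded_grid_Rpower by lia.
  pose proof (INR_pos n ltac:(lia)); pose proof (INR_pos N N_ge1).
  rewrite <- Rpower_mult_distr, Rpower_mult by (lra || apply Rpower_pos).
  assert (Hdec : Rpower (INR n / INR N) (gamma * e) <=
                 INR n ^ 2 * Rpower (INR N) (- Rmin 2 (gamma * e))).
  { apply Rpower_div_le_Rmin; [split; [apply (le_INR 1) | apply le_INR]; lia | nra]. }
  pose proof (Rpower_pos T e). nra.
Qed.

Lemma graded_grid_local_le j n iota : 0 <= iota <= 2 -> (1 <= j < n)%nat -> (n <= j + 2)%nat ->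
  (n <= N)%nat ->
  Rpower (t j) (iota - 2) * (t n - t j) ^ 2 <=
  4 * gamma ^ 2 * Rpower 3 (gamma * (2 - iota)) *
  (Rpower T iota * Rpower (INR N) (- Rmin 2 (gamma * iota))).
Proof.
  intros Hi Hjn Hn2 HnN.
  pose proof (INR_pos n ltac:(lia)) as Hn0.
  pose proof (graded_grid_pos n ltac:(lia)) as Htn.
  assert (Hlow : Rpower (t j) (iota - 2) <= Rpower 3 (gamma * (2 - iota)) * Rpower (t n) (iota - 2)).
  { replace (gamma * (2 - iota)) with (- (gamma * (iota - 2))) by ring.
    apply graded_grid_Rpower_antitone; lia || lra. }
  assert (Hgap : 0 <= t n - t j <= 2 * gamma / INR n * t n).
  { split; [pose proof (is_grid_lt T N t graded_grid_is_grid j n ltac:(lia)); lra|].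
    eapply Rle_trans; [apply graded_grid_gap; lia|].
    assert (INR n - INR j <= 2).
    { rewrite <- minus_INR by lia. replace 2 with (INR 2) by reflexivity. apply le_INR; lia. }
    apply Rmult_le_compat_r; [lra|]. unfold Rdiv.
    apply Rmult_le_compat_r; [left; apply Rinv_0_lt_compat; lra|].
    nra. }
  assert (Hsq : (t n - t j) ^ 2 <= (2 * gamma / INR n) ^ 2 * t n ^ 2).
  { rewrite <- Rpow_mult_distr. apply pow_incr; lra. }
  assert (Hpow : Rpower (t n) (iota - 2) * t n ^ 2 = Rpower (t n) iota).
  { rewrite <- Rpower_2, <- Rpower_plus by lra. f_equal; ring. }
  pose proof (graded_grid_Rpower_decay n iota ltac:(lra) ltac:(lia)) as Hdec.
  set (B := Rpower T iota * Rpower (INR N) (- Rmin 2 (gamma * iota))) in *.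
  set (K3 := Rpower 3 (gamma * (2 - iota))) in *.
  assert (HK3 : 0 < K3) by apply Rpower_pos.
  pose proof (Rpower_pos (t j) (iota - 2)). pose proof (Rpower_pos (t n) (iota - 2)).
  apply Rle_trans with (K3 * Rpower (t n) (iota - 2) * ((2 * gamma / INR n) ^ 2 * t n ^ 2)).
  { apply Rmult_le_compat; nra. }
  replace (K3 * Rpower (t n) (iota - 2) * ((2 * gamma / INR n) ^ 2 * t n ^ 2))
    with (4 * gamma ^ 2 * K3 * (Rpower (t n) iota / INR n ^ 2)) by (rewrite <- Hpow; field; lra).
  apply Rmult_le_compat_l; [nra|].
  apply (Rmult_le_reg_r (INR n ^ 2)); [nra|]. field_simplify; lra.
Qed.

End GradedGrid.

(* dd2 v a b c = (c - b) (v[b,c] - v[a,b]) with divided differences v[x,y]. *)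
Definition dd2 (v : R -> R) (a b c : R) : R :=
  v c - (1 + (c - b) / (b - a)) * v b + (c - b) / (b - a) * v a.

Lemma Rres_dd2 (t : nat -> R) v n : Rres t v n = dd2 v (t (n - 2)%nat) (t (n - 1)%nat) (t n).
Proof.
  unfold Rres, dd2, ratio, tau. rewrite <- !Nat.sub_1_r.
  now replace (n - 1 - 1)%nat with (n - 2)%nat by lia.
Qed.

Section WeaklySingular.

Variables (T iota C : R) (v v1 v2 : R -> R).
Hypotheses (iota_gt0 : 0 < iota) (iota_lt1 : iota < 1) (C_ge0 : 0 <= C).
Hypothesis v_cont : forall x, 0 <= x <= T -> continuity_pt v x.
Hypothesis v_deriv : forall x, 0 < x < T -> is_derive v x (v1 x).
Hypothesis v1_deriv : forall x, 0 < x < T -> is_derive v1 x (v2 x).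
Hypothesis v2_bound : forall x, 0 < x < T -> Rabs (v2 x) <= C * (1 + rpow x (iota - 2)).

Let S := Rpower T (2 - iota).
Let k := C / (iota * (1 - iota)).

Lemma v2_bound_ge a x : 0 < a <= x -> x < T ->
  Rabs (v2 x) <= C * (1 + Rpower a (iota - 2)).
Proof.
  intros Hax HxT. eapply Rle_trans; [apply v2_bound; lra|].
  rewrite rpow_Rpower by lra. apply Rmult_le_compat_l; [exact C_ge0|].
  apply Rplus_le_compat_l, Rle_Rpower_l_neg; lra.
Qed.

Lemma Rpower_T_mul_ge1 a : 0 < a <= T -> 1 <= S * Rpower a (iota - 2).
Proof.
  intros Ha. rewrite <- (Rpower_O a) by lra. replace 0 with ((2 - iota) + (iota - 2)) by ring.
  rewrite Rpower_plus. apply Rmult_le_compat_r; [left; apply Rpower_pos|].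
  apply Rle_Rpower_l; lra.
Qed.

Lemma dd2_le a b c : 0 < a < b -> b < c <= T ->
  Rabs (dd2 v a b c) <= C * (1 + S) * (Rpower a (iota - 2) * (c - a) ^ 2).
Proof.
  intros Hab Hbc. set (V := Rpower a (iota - 2)). set (M := C * (1 + V)).
  assert (HM : forall x, a < x < c -> Rabs (v2 x) <= M) by (intros; apply v2_bound_ge; lra).
  assert (Hcb : continuity_pt v1 b) by exact (is_derive_continuity_pt _ _ _ (v1_deriv b ltac:(lra))).
  assert (Hright : Rabs (v c - v b - (c - b) * v1 b) <= M * (c - b) ^ 2).
  { apply (taylor1_Rabs_le v v1 v2); try lra; auto;
      intros x Hx; (apply v_cont || apply v_deriv || apply v1_deriv || apply HM); lra. }
  assert (Hleft : Rabs (v b - v a - (b - a) * v1 b) <= M * (b - a) ^ 2).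
  { apply (taylor1_Rabs_le v v1 v2); try lra; auto;
      intros x Hx; (apply v_cont || apply v_deriv || apply v1_deriv || apply HM); lra. }
  set (r := (c - b) / (b - a)).
  assert (Hr : r * (b - a) = c - b) by (unfold r; field; lra).
  assert (Hr0 : 0 < r) by (unfold r; apply Rdiv_lt_0_compat; lra).
  replace (dd2 v a b c) with
    ((v c - v b - (c - b) * v1 b) - r * (v b - v a - (b - a) * v1 b))
    by (unfold dd2; fold r; rewrite <- Hr; ring).
  assert (HM0 : 0 <= M) by (unfold M, V; pose proof (Rpower_pos a (iota - 2)); nra).
  assert (HMS : M <= C * (1 + S) * V).
  { pose proof (Rpower_T_mul_ge1 a ltac:(lra)) as HSV; fold V in HSV.
    assert (0 <= C * (S * V - 1)) by (apply Rmult_le_pos; lra). unfold M; lra. }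
  eapply Rle_trans; [apply Rabs_triang|]. rewrite Rabs_Ropp, Rabs_mult, (Rabs_right r) by lra.
  assert (Hgap : (c - b) ^ 2 + r * (b - a) ^ 2 <= (c - a) ^ 2).
  { replace (r * (b - a) ^ 2) with ((c - b) * (b - a)) by (rewrite <- Hr; ring). nra. }
  apply Rle_trans with (M * (c - a) ^ 2); [nra|].
  rewrite <- Rmult_assoc. apply Rmult_le_compat_r; [nra | exact HMS].
Qed.

Lemma v1_sub_le y a : 0 < y <= a -> a < T ->
  Rabs (v1 a - v1 y) <= C * (a - y) + C / (1 - iota) * Rpower y (iota - 1).
Proof.
  intros Hy HaT.
  set (P := fun s => C * s - C / (1 - iota) * Rpower s (iota - 1)).
  assert (HP : forall s, 0 < s -> is_derive P s (C * (1 + Rpower s (iota - 2)))).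
  { intros s Hs. apply (is_derive_eq _ _ (C - C / (1 - iota) * ((iota - 1) * Rpower s (iota - 1 - 1)))).
    { replace (iota - 1 - 1) with (iota - 2) by ring. field; lra. }
    apply (is_derive_minus (fun s => C * s) (fun s => C / (1 - iota) * Rpower s (iota - 1))).
    - apply is_derive_scal_id.
    - apply is_derive_scal, is_derive_Rpower; exact Hs. }
  apply Rle_trans with (P a - P y).
  - apply (Rabs_sub_le_of_derive_le v1 v2 P (fun s => C * (1 + Rpower s (iota - 2)))); try lra.
    + intros x Hx; exact (is_derive_continuity_pt _ _ _ (v1_deriv x ltac:(lra))).
    + intros x Hx; exact (is_derive_continuity_pt _ _ _ (HP x ltac:(lra))).
    + intros x Hx; apply v1_deriv; lra.
    + intros x Hx; apply HP; lra.
    + intros x Hx; rewrite <- rpow_Rpower by lra; apply v2_bound; lra.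
  - unfold P. assert (0 <= C / (1 - iota) * Rpower a (iota - 1)).
    { apply Rmult_le_pos; [apply Rdiv_le_0_compat; lra | left; apply Rpower_pos]. }
    lra.
Qed.

Lemma taylor_origin_le a : 0 < a < T ->
  Rabs (v a - v 0 - a * v1 a) <= k * Rpower a iota + C / 2 * a ^ 2.
Proof.
  intros Ha.
  set (f := fun y => v y - v1 a * y).
  set (Q := fun y => k * Rpower y iota + C * (a * y - y ^ 2 / 2)).
  assert (Hf : forall y, 0 < y < T -> is_derive f y (v1 y - v1 a)).
  { intros y Hy; apply (is_derive_minus v (fun y => v1 a * y));
      [now apply v_deriv | apply is_derive_scal_id]. }
  assert (HQ : forall y, 0 < y -> is_derive Q y (C / (1 - iota) * Rpower y (iota - 1) + C * (a - y))).
  { intros y Hy. apply (is_derive_eq _ _ (k * (iota * Rpower y (iota - 1)) + C * (a - y))).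
    { unfold k; field; lra. }
    apply (is_derive_plus (fun y => k * Rpower y iota) (fun y => C * (a * y - y ^ 2 / 2))).
    - apply is_derive_scal, is_derive_Rpower; exact Hy.
    - auto_derive; [exact I | field]. }
  (* v is only continuous at 0: compare on [x, a], then let x tend to 0. *)
  replace (v a - v 0 - a * v1 a) with (f a - f 0) by (unfold f; ring).
  apply (Rabs_le_of_continuity_pt_right (fun x => f a - f x) 0 a); [| lra |].
  - apply (continuity_pt_minus (fun _ => f a) f); [now apply continuity_pt_const|].
    apply (continuity_pt_minus v (fun y => v1 a * y)); [apply v_cont; lra|].
    exact (is_derive_continuity_pt _ _ _ (is_derive_scal_id (v1 a) 0)).
  - intros x Hx. apply Rle_trans with (Q a - Q x).
    + apply (Rabs_sub_le_of_derive_le f (fun y => v1 y - v1 a) Q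
               (fun y => C / (1 - iota) * Rpower y (iota - 1) + C * (a - y))); try lra.
      * intros y Hy; exact (is_derive_continuity_pt _ _ _ (Hf y ltac:(lra))).
      * intros y Hy; exact (is_derive_continuity_pt _ _ _ (HQ y ltac:(lra))).
      * intros y Hy; apply Hf; lra.
      * intros y Hy; apply HQ; lra.
      * intros y Hy; rewrite Rabs_minus_sym.
        pose proof (v1_sub_le y a ltac:(lra) ltac:(lra)); lra.
    + replace (Q a - Q x) with (k * Rpower a iota - k * Rpower x iota + C / 2 * (a - x) ^ 2)
        by (unfold Q; field).
      assert (0 <= k * Rpower x iota).
      { apply Rmult_le_pos; [unfold k; apply Rdiv_le_0_compat; nra | left; apply Rpower_pos]. }
      assert (C / 2 * (a - x) ^ 2 <= C / 2 * a ^ 2) by (apply Rmult_le_compat_l; nra).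
      lra.
Qed.

(* The inequality d a <= a^2 + d^2 splits this term between the two summands. *)
Lemma origin_weight_le a d : 0 < a <= T -> 0 < d ->
  d / a * (k * Rpower a iota + C / 2 * a ^ 2) <=
  (k + C / 2 * S) * (Rpower (a + d) iota + Rpower a (iota - 2) * d ^ 2).
Proof.
  intros Ha Hd. set (V := Rpower a (iota - 2)).
  assert (HSV : 1 <= S * V) by exact (Rpower_T_mul_ge1 a Ha).
  assert (HaV : Rpower a iota = V * a ^ 2).
  { unfold V; rewrite <- Rpower_2, <- Rpower_plus by lra; f_equal; ring. }
  assert (Hb : Rpower a iota <= Rpower (a + d) iota) by (apply Rle_Rpower_l; lra).
  assert (Hk : 0 <= k) by (unfold k; apply Rdiv_le_0_compat; nra).
  replace (d / a * (k * Rpower a iota + C / 2 * a ^ 2)) with ((k * V + C / 2) * (d * a))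
    by (rewrite HaV; field; lra).
  assert (HY : V * (d * a) <= Rpower (a + d) iota + V * d ^ 2).
  { assert (d * a <= a ^ 2 + d ^ 2) by nra.
    assert (V * (d * a) <= V * (a ^ 2 + d ^ 2))
      by (apply Rmult_le_compat_l; [left; apply Rpower_pos | lra]).
    lra. }
  assert (0 < S) by apply Rpower_pos.
  apply Rle_trans with ((k + C / 2 * S) * (V * (d * a))).
  - replace ((k + C / 2 * S) * (V * (d * a))) with ((k * V + C / 2 * (S * V)) * (d * a)) by ring.
    apply Rmult_le_compat_r; [nra|]. apply Rplus_le_compat_l.
    rewrite <- (Rmult_1_r (C / 2)) at 1. apply Rmult_le_compat_l; lra.
  - apply Rmult_le_compat_l; [nra | exact HY].
Qed.

Lemma dd2_origin_le a b : 0 < a < b -> b <= T ->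
  Rabs (dd2 v 0 a b) <= (2 * C * (1 + S) + k) * (Rpower b iota + Rpower a (iota - 2) * (b - a) ^ 2).
Proof.
  intros Hab HbT. set (V := Rpower a (iota - 2)). set (d := b - a).
  assert (Hright : Rabs (v b - v a - d * v1 a) <= C * (1 + V) * d ^ 2).
  { apply (taylor1_Rabs_le v v1 v2); try lra.
    - intros x Hx; apply v_cont; lra.
    - intros x Hx; apply v_deriv; lra.
    - intros x Hx; apply v1_deriv; lra.
    - exact (is_derive_continuity_pt _ _ _ (v1_deriv a ltac:(lra))).
    - intros x Hx; apply v2_bound_ge; lra. }
  pose proof (taylor_origin_le a ltac:(lra)) as Horigin.
  pose proof (origin_weight_le a d ltac:(lra) ltac:(unfold d; lra)) as Hweight.
  replace (a + d) with b in Hweight by (unfold d; ring). fold V in Hweight.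
  set (r := d / (a - 0)).
  assert (Hr : r * a = d) by (unfold r; field; lra).
  assert (Hr0 : 0 < r) by (unfold r, d; apply Rdiv_lt_0_compat; lra).
  replace (dd2 v 0 a b) with ((v b - v a - d * v1 a) - r * (v a - v 0 - a * v1 a))
    by (unfold dd2; fold d r; rewrite <- Hr; ring).
  replace (d / a) with r in Hweight by (unfold r; f_equal; ring).
  eapply Rle_trans; [apply Rabs_triang|]. rewrite Rabs_Ropp, Rabs_mult, (Rabs_right r) by lra.
  assert (r * Rabs (v a - v 0 - a * v1 a) <= r * (k * Rpower a iota + C / 2 * a ^ 2))
    by (apply Rmult_le_compat_l; lra).
  set (W := Rpower b iota) in *. set (X := V * d ^ 2) in *.
  assert (HSV : 1 <= S * V) by exact (Rpower_T_mul_ge1 a ltac:(lra)).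
  assert (0 <= X) by (apply Rmult_le_pos; [left; apply Rpower_pos | apply pow2_ge_0]).
  assert (0 <= W) by (left; apply Rpower_pos).
  assert (0 < S) by apply Rpower_pos.
  assert (Hreg : C * (1 + V) * d ^ 2 <= C * (1 + S) * X).
  { assert (0 <= C * (S * V - 1) * d ^ 2) by (apply Rmult_le_pos; [apply Rmult_le_pos |]; nra).
    unfold X; nra. }
  assert (0 <= C * (1 + S) * W) by (repeat apply Rmult_le_pos; lra).
  assert (0 <= C * S * (W + X)) by (repeat apply Rmult_le_pos; lra).
  assert (0 <= C * (W + X)) by (repeat apply Rmult_le_pos; lra).
  lra.
Qed.

Let K := 2 * C * (1 + S) + k.

Let K_ge_reg : 0 <= C * (1 + S) <= K.
Proof.
  assert (0 < S) by apply Rpower_pos.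
  assert (0 <= k) by (unfold k; apply Rdiv_le_0_compat; nra).
  unfold K; split; nra.
Qed.

Let K_ge0 : 0 <= K.
Proof. pose proof K_ge_reg; lra. Qed.

Lemma Rres_2_le N t : is_grid T N t -> (2 <= N)%nat ->
  Rabs (Rres t v 2) <=
  K * (rpow (tau t 1 + tau t 2) iota / iota + rpow (t 1%nat) (iota - 2) * tau t 2 ^ 2).
Proof.
  intros G HN. pose proof (is_grid_lt T N t G 0 1 ltac:(lia)) as Ht1.
  pose proof (is_grid_lt T N t G 1 2 ltac:(lia)) as Ht12.
  pose proof (is_grid_le_T T N t 2 G HN) as Ht2.
  destruct G as (Ht0 & _ & _). rewrite Ht0 in Ht1.
  rewrite Rres_dd2; simpl (2 - 2)%nat; simpl (2 - 1)%nat; rewrite Ht0.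
  unfold tau; simpl pred; rewrite Ht0, Rminus_0_r, Rplus_minus, !rpow_Rpower by lra.
  eapply Rle_trans; [apply dd2_origin_le; lra|]. fold K.
  apply Rmult_le_compat_l; [exact K_ge0|]. apply Rplus_le_compat_r.
  pose proof (Rpower_pos (t 2%nat) iota).
  apply (Rmult_le_reg_r iota); [lra|]. field_simplify; [nra | lra].
Qed.

Lemma Rres_le N t n : is_grid T N t -> (3 <= n <= N)%nat ->
  Rabs (Rres t v n) <=
  K * (rpow (t (n - 2)%nat) (iota - 2) * (tau t (n - 1) + tau t n) ^ 2
       + rpow (t (n - 1)%nat) (iota - 2) * tau t n ^ 2).
Proof.
  intros G Hn. pose proof (is_grid_lt T N t G) as Glt.
  pose proof (Glt 0 (n - 2) ltac:(lia))%nat as Ha.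
  pose proof (Glt (n - 2) (n - 1) ltac:(lia))%nat as Hab.
  pose proof (Glt (n - 1) n ltac:(lia))%nat as Hbc. pose proof (is_grid_le_T T N t n G ltac:(lia)) as Hc.
  destruct G as (Ht0 & _ & _). rewrite Ht0 in Ha.
  unfold tau. replace (pred (n - 1)) with (n - 2)%nat by lia. replace (pred n) with (n - 1)%nat by lia.
  replace (t (n - 1)%nat - t (n - 2)%nat + (t n - t (n - 1)%nat)) with (t n - t (n - 2)%nat) by ring.
  rewrite Rres_dd2, !rpow_Rpower by lra.
  eapply Rle_trans; [apply dd2_le; lra|].
  pose proof K_ge_reg.
  pose proof (Rpower_pos (t (n - 2)%nat) (iota - 2)). pose proof (Rpower_pos (t (n - 1)%nat) (iota - 2)).
  assert (0 <= Rpower (t (n - 1)%nat) (iota - 2) * (t n - t (n - 1)%nat) ^ 2)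
    by (apply Rmult_le_pos; [lra | apply pow2_ge_0]).
  assert (0 <= Rpower (t (n - 2)%nat) (iota - 2) * (t n - t (n - 2)%nat) ^ 2)
    by (apply Rmult_le_pos; [lra | apply pow2_ge_0]).
  apply Rle_trans with (K * (Rpower (t (n - 2)%nat) (iota - 2) * (t n - t (n - 2)%nat) ^ 2)).
  - apply Rmult_le_compat_r; lra.
  - apply Rmult_le_compat_l; [exact K_ge0 | lra].
Qed.

Lemma Rres_graded_grid_le gamma N n : 0 < T -> 1 <= gamma -> (2 <= n <= N)%nat ->
  Rabs (Rres (graded_grid T N gamma) v n) <=
  K * (4 + 4 * gamma ^ 2 * Rpower 3 (gamma * (2 - iota))) * Rpower T iota *
  rpow (INR N) (- Rmin 2 (gamma * iota)).
Proof.
  intros HT Hg Hn. set (t := graded_grid T N gamma).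
  pose proof (graded_grid_is_grid T gamma N HT Hg ltac:(lia)) as G.
  assert (HN : 0 < INR N) by (apply lt_0_INR; lia). rewrite rpow_Rpower by exact HN.
  set (B := Rpower T iota * Rpower (INR N) (- Rmin 2 (gamma * iota))).
  set (A3 := 4 * gamma ^ 2 * Rpower 3 (gamma * (2 - iota))).
  assert (HB : 0 < B) by (apply Rmult_lt_0_compat; apply Rpower_pos).
  assert (HA3 : 0 <= A3) by (unfold A3; pose proof (Rpower_pos 3 (gamma * (2 - iota))); nra).
  replace (K * (4 + A3) * Rpower T iota * Rpower (INR N) (- Rmin 2 (gamma * iota)))
    with (K * ((4 + A3) * B)) by (unfold B; ring).
  pose proof (is_grid_lt T N t G) as Glt.
  pose proof (Glt (n - 2) (n - 1) ltac:(lia))%nat as Hab.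
  pose proof (Glt (n - 1) n ltac:(lia))%nat as Hbc.
  pose proof (is_grid_le_T T N t n G ltac:(lia)) as Hc.
  rewrite Rres_dd2. destruct (Nat.eq_dec n 2) as [-> | Hn3].
  - simpl (2 - 2)%nat in *; simpl (2 - 1)%nat in *.
    assert (Ht0 : t 0%nat = 0) by apply G. rewrite Ht0 in *.
    eapply Rle_trans; [apply dd2_origin_le; lra|]. fold K.
    apply Rmult_le_compat_l; [exact K_ge0|]. rewrite Rmult_plus_distr_r.
    apply Rplus_le_compat.
    + replace (4 * B) with (INR 2 ^ 2 * B) by (simpl; ring).
      apply graded_grid_Rpower_decay; lra || lia.
    + apply graded_grid_local_le; lra || lia.
  - pose proof (Glt 0 (n - 2) ltac:(lia))%nat as Ha.
    assert (Ht0 : t 0%nat = 0) by apply G. rewrite Ht0 in Ha.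
    eapply Rle_trans; [apply dd2_le; lra|].
    pose proof K_ge_reg.
    assert (Hloc : Rpower (t (n - 2)%nat) (iota - 2) * (t n - t (n - 2)%nat) ^ 2 <= A3 * B).
    { apply graded_grid_local_le; lra || lia. }
    assert (0 <= Rpower (t (n - 2)%nat) (iota - 2) * (t n - t (n - 2)%nat) ^ 2)
      by (apply Rmult_le_pos; [left; apply Rpower_pos | apply pow2_ge_0]).
    apply Rle_trans with (K * (A3 * B)).
    + apply Rmult_le_compat; lra.
    + apply Rmult_le_compat_l; [exact K_ge0 | nra].
Qed.

End WeaklySingular.

Theorem mainTheorem2 :
  forall (T iota C : R) (v v1 v2 : R -> R),
    0 < T -> 0 < iota -> iota < 1 ->
    (forall x, 0 <= x <= T -> continuity_pt v x) ->
    (forall x, 0 < x < T -> is_derive v x (v1 x)) ->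
    (forall x, 0 < x < T -> is_derive v1 x (v2 x)) ->
    (forall x, 0 < x < T -> continuity_pt v2 x) ->
    (forall x, 0 < x < T -> Rabs (v2 x) <= C * (1 + rpow x (iota - 2))) ->
    (exists Cv : R,
       forall (N : nat) (t : nat -> R), is_grid T N t ->
         ((2 <= N)%nat ->
            Rabs (Rres t v 2) <=
              Cv * (rpow (tau t 1 + tau t 2) iota / iota
                    + rpow (t 1%nat) (iota - 2) * (tau t 2) ^ 2)) /\
         (forall n : nat, (3 <= n <= N)%nat ->
            Rabs (Rres t v n) <=
              Cv * (rpow (t (n - 2)%nat) (iota - 2) * (tau t (n - 1) + tau t n) ^ 2
                    + rpow (t (n - 1)%nat) (iota - 2) * (tau t n) ^ 2)))
    /\
    (forall gamma : R, 1 <= gamma ->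
       exists Cvg : R,
         forall (N n : nat), (2 <= n <= N)%nat ->
           Rabs (Rres (graded_grid T N gamma) v n) <=
             Cvg * rpow (INR N) (- Rmin 2 (gamma * iota))).
Proof.
  intros T iota C v v1 v2 HT Hi Hi1 Hc Hd1 Hd2 _ Hb.
  assert (HC : 0 <= C).
  { pose proof (Hb (T / 2) ltac:(lra)); pose proof (Rabs_pos (v2 (T / 2))).
    pose proof (rpow_ge0 (T / 2) (iota - 2)). nra. }
  split.
  - eexists; intros N t G; split.
    + exact (Rres_2_le T iota C v v1 v2 Hi Hi1 HC Hc Hd1 Hd2 Hb N t G).
    + intros n; exact (Rres_le T iota C v v1 v2 Hi Hi1 HC Hc Hd1 Hd2 Hb N t n G).
  - intros gamma Hg; eexists; intros N n Hn.
    exact (Rres_graded_grid_le T iota C v v1 v2 Hi Hi1 HC Hc Hd1 Hd2 Hb gamma N n HT Hg Hn).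
Qed.
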